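(* Let $n\ge2$, $\alpha>1$, let $\Omega_\alpha=\{(x,y)\in\mathbb{R}\times\mathbb{R}^{n-1}:0<x<1,\ |y|<x^\alpha\}$, and for positive integers $j,m$ let $\ell=\lfloor\log_2 m\rfloor+1$ and \[ S_{j,m}=\Big\{(x,y): \tfrac{m}{2^{j+\ell}}\le x\le\tfrac{m+1}{2^{j+\ell}},\ \big(1-\tfrac{1}{2^{\ell-1}}\big)x^\alpha\le |y|\le\big(1-\tfrac{1}{2^{\ell}}\big)x^\alpha\Big\}. \] Then \[ \delta(S_{j,m})\ge C(\alpha)\,\frac{1}{2^{\alpha j+\ell}}, \] where $\delta(S_{j,m})$ is the Euclidean distance from $S_{j,m}$ to $\partial\Omega_\alpha$ and $C(\alpha)>0$ depends only on $\alpha$.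
   Context: Here $|y|$ is the Euclidean norm of $y\in\mathbb{R}^{n-1}$. *)

From HB Require Import structures.
From mathcomp Require Import all_boot all_order all_algebra.
From mathcomp Require Import all_classical all_reals all_analysis.
Set Implicit Arguments. Unset Strict Implicit. Unset Printing Implicit Defensive.
Import Order.TTheory GRing.Theory Num.Theory.
Import numFieldNormedType.Exports.
Local Open Scope classical_set_scope.
Local Open Scope ring_scope.

(* Points of R x R^(n-1) are pairs (x, y) with y : 'rV[R]_k, k = n - 1. *)

Definition eucl_norm (R : realType) (k : nat) (y : 'rV[R]_k) : R :=
  Num.sqrt (\sum_(i < k) y ord0 i ^+ 2).

Definition eucl_dist (R : realType) (k : nat) (p q : R * 'rV[R]_k) : R :=
  Num.sqrt ((p.1 - q.1) ^+ 2 + \sum_(i < k) (p.2 ord0 i - q.2 ord0 i) ^+ 2).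

(* topological boundary (product topology = Euclidean topology) *)
Definition tboundary (T : topologicalType) (A : set T) : set T :=
  closure A `\` interior A.

Definition Omega (R : realType) (k : nat) (alpha : R) : set (R * 'rV[R]_k) :=
  [set p | 0 < p.1 < 1 /\ eucl_norm p.2 < p.1 `^ alpha].

Definition ell (m : nat) : nat := (trunc_log 2 m).+1.

Definition Sjm (R : realType) (k : nat) (alpha : R) (j m : nat)
  : set (R * 'rV[R]_k) :=
  [set p | (m%:R / 2 ^+ (j + ell m) <= p.1 <= (m.+1)%:R / 2 ^+ (j + ell m))
        /\ ((1 - 1 / 2 ^+ (ell m).-1) * p.1 `^ alpha <= eucl_norm p.2
            <= (1 - 1 / 2 ^+ (ell m)) * p.1 `^ alpha)].

From HB Require Import structures.
From mathcomp Require Import all_boot all_order all_algebra.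
From mathcomp Require Import all_classical all_reals all_analysis.
From mathcomp Require Import ring lra.
Set Implicit Arguments. Unset Strict Implicit. Unset Printing Implicit Defensive.
Import Order.TTheory GRing.Theory Num.Theory.
Import numFieldNormedType.Exports.
Local Open Scope classical_set_scope.
Local Open Scope ring_scope.

(* A point (x, y) of S_{j,m} has 2^-(j+1) <= x <= 2^-j and lies below the
   surface |y| = x^alpha by at least 2^-l x^alpha >= 2^-alpha 2^-(alpha j + l).
   Since (x - d)^alpha >= x^alpha - 2 alpha d for d <= x/2, every point within
   distance 2^-l x^alpha / (1 + 2 alpha) of (x, y) still lies in the open set
   Omega_alpha, hence not on its boundary. *)

Section SumOfSquares.
Variables (R : realType) (k : nat).
Implicit Types a b : 'I_k -> R.

Lemma sumr_sqr_ge0 a : 0 <= \sum_i a i ^+ 2.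
Proof. by apply: sumr_ge0 => i _; exact: sqr_ge0. Qed.

Lemma sumr_mul_sqr_le a b :
  (\sum_i a i * b i) ^+ 2 <= (\sum_i a i ^+ 2) * (\sum_i b i ^+ 2).
Proof.
set A := \sum_i a i ^+ 2; set B := \sum_i b i ^+ 2; set S := \sum_i a i * b i.
have lagrange : \sum_i \sum_j (a i * b j - a j * b i) ^+ 2 = 2 * (A * B - S ^+ 2).
  rewrite (_ : 2 * _ = A * B + B * A - 2 * (S * S)); last by ring.
  rewrite !big_distrlr /= mulr_sumr -big_split -sumrB; apply: eq_bigr => i _ /=.
  rewrite mulr_sumr -big_split -sumrB; apply: eq_bigr => j _ /=; ring.
rewrite -subr_ge0 -(pmulr_rge0 _ (ltr0Sn R 1)) -lagrange.
by apply: sumr_ge0 => i _; exact: sumr_sqr_ge0.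
Qed.

Lemma sumr_mul_le_sqrt a b :
  \sum_i a i * b i <= Num.sqrt (\sum_i a i ^+ 2) * Num.sqrt (\sum_i b i ^+ 2).
Proof.
rewrite -sqrtrM ?sumr_sqr_ge0 // (le_trans (ler_norm _)) // -sqrtr_sqr.
by rewrite ler_sqrt ?sumr_mul_sqr_le // mulr_ge0 ?sumr_sqr_ge0.
Qed.

Lemma sqrt_sumr_sqrD_le a b :
  Num.sqrt (\sum_i (a i + b i) ^+ 2) <=
  Num.sqrt (\sum_i a i ^+ 2) + Num.sqrt (\sum_i b i ^+ 2).
Proof.
have := sumr_mul_le_sqrt a b.
set A := Num.sqrt _; set B := Num.sqrt _ => ab_le.
have expand : \sum_i (a i + b i) ^+ 2 =
    \sum_i a i ^+ 2 + 2 * \sum_i a i * b i + \sum_i b i ^+ 2.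
  by rewrite mulr_sumr -!big_split; apply: eq_bigr => i _ /=; ring.
rewrite -[A + B]ger0_norm ?addr_ge0 ?sqrtr_ge0 // -sqrtr_sqr ler_sqrt ?sqr_ge0 //.
by rewrite expand -[X in X + _ + _](sqr_sqrtr (sumr_sqr_ge0 a))
  -[X in _ + X](sqr_sqrtr (sumr_sqr_ge0 b)) -/A -/B; lra.
Qed.

End SumOfSquares.

Section EuclideanNorm.
Variables (R : realType) (k : nat).
Implicit Types (y z : 'rV[R]_k) (p q : R * 'rV[R]_k).

Lemma eucl_normD y z : eucl_norm (y + z) <= eucl_norm y + eucl_norm z.
Proof.
rewrite /eucl_norm; under eq_bigr do rewrite mxE.
exact: sqrt_sumr_sqrD_le.
Qed.

Lemma eucl_norm_le_dist p q : eucl_norm (q.2 - p.2) <= eucl_dist p q.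
Proof.
rewrite /eucl_norm /eucl_dist ler_sqrt ?addr_ge0 ?sqr_ge0 ?sumr_sqr_ge0 //.
under eq_bigr do rewrite !mxE -sqrrN opprB.
by rewrite lerDr sqr_ge0.
Qed.

Lemma norm_fst_le_dist p q : `|p.1 - q.1| <= eucl_dist p q.
Proof.
rewrite -sqrtr_sqr /eucl_dist ler_sqrt ?addr_ge0 ?sqr_ge0 ?sumr_sqr_ge0 //.
by rewrite lerDl sumr_sqr_ge0.
Qed.

Lemma continuous_eucl_norm : continuous (@eucl_norm R k).
Proof.
move=> y; apply: continuous_comp (@sqrt_continuous R _).
apply: (continuous_big add_continuous) => i _ z.
apply: continuous_comp (@exprn_continuous R 2 _).
exact: coord_continuous.
Qed.

End EuclideanNorm.

Section PowerBounds.
Variable R : realType.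
Implicit Types alpha s x : R.

Lemma ln_1B_ge s : 0 <= s <= 2^-1 -> - (2 * s) <= ln (1 - s).
Proof.
move=> /andP[s_ge0 s_le]; have t_gt0 : 0 < 1 - s by lra.
have inv_le : (1 - s)^-1 <= 1 + 2 * s.
  by rewrite -[X in X <= _]div1r ler_pdivrMr //; nra.
have := @le_ln1Dx R ((1 - s)^-1 - 1); rewrite addrCA subrr addr0 lnV ?posrE //.
have : 0 < (1 - s)^-1 by rewrite invr_gt0.
lra.
Qed.

Lemma powR_1B_ge alpha s : 0 <= alpha -> 0 <= s <= 2^-1 ->
  1 - 2 * alpha * s <= (1 - s) `^ alpha.
Proof.
move=> alpha_ge0 s_bnd; have ln_ge := ln_1B_ge s_bnd.
move: s_bnd => /andP[s_ge0 s_le].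
rewrite /powR gt_eqF; last lra.
by apply: le_trans (expR_ge1Dx _); nra.
Qed.

Lemma dyadic_powR_le alpha x (i : nat) : 0 <= alpha -> (2 ^+ i)^-1 <= x ->
  (2 `^ (alpha * i%:R))^-1 <= x `^ alpha.
Proof.
move=> alpha_ge0 x_ge; rewrite -powRN -mulrN mulrC powRrM powR_invn //.
have inv_ge0 : 0 <= 2 ^- i :> R by rewrite invr_ge0 exprn_ge0.
by apply: ge0_ler_powR; rewrite // nnegrE // (le_trans inv_ge0).
Qed.

Lemma dyadic_scale_le_powR alpha x (j l : nat) : 0 <= alpha ->
  (2 ^+ j.+1)^-1 <= x ->
  (2 `^ alpha)^-1 * (2 `^ (alpha * j%:R + l%:R))^-1 <= (2 ^+ l)^-1 * x `^ alpha.
Proof.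
move=> alpha_ge0 x_ge.
have pow_split : 2 `^ alpha * 2 `^ (alpha * j%:R + l%:R) =
    2 ^+ l * 2 `^ (alpha * j.+1%:R).
  rewrite -[j.+1]addn1 natrD mulrDr mulr1 !powRD ?pnatr_eq0 ?implybT //.
  by rewrite powR_mulrn //; ring.
rewrite -invfM pow_split invfM ler_wpM2l ?invr_ge0 ?exprn_ge0 //.
exact: dyadic_powR_le.
Qed.

End PowerBounds.

Section Omega.
Variables (R : realType) (k : nat) (alpha : R).

Lemma open_Omega : open (@Omega R k alpha).
Proof.
rewrite openE => p [/andP[p1_gt0 p1_lt1] p2_lt].
have fst_cvg : fst @ p --> p.1 by apply: cvg_fst.
have snd_cvg : snd @ p --> p.2 by apply: cvg_snd.
have pow_cont : {for p.1, continuous (@powR R ^~ alpha)}.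
  apply/differentiable_continuous/derivable1_diffP.
  by apply: derivable_powR; rewrite in_itv /= andbT.
have gap_cvg : (fun q => q.1 `^ alpha - eucl_norm q.2) @ p
    --> p.1 `^ alpha - eucl_norm p.2.
  apply: cvgB; first exact: (continuous_comp fst_cvg pow_cont).
  exact: (continuous_comp snd_cvg (@continuous_eucl_norm R k p.2)).
near=> q; split; first (apply/andP; split).
- by near: q; exact: cvgr_gt fst_cvg _ p1_gt0.
- by near: q; exact: cvgr_lt fst_cvg _ p1_lt1.
- rewrite -subr_gt0; near: q; apply: cvgr_gt gap_cvg _ _.
  by rewrite subr_gt0.
Unshelve. all: end_near.
Qed.

(* Moving p by d moves x by at most d and |y| by at most d, while for
   d <= x/2 the bound (x - d)^alpha >= x^alpha - 2 alpha d lowers the ceiling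
   by at most 2 alpha d: the slack eps x^alpha absorbs (1 + 2 alpha) d. *)
Lemma Omega_of_dist_lt (eps : R) (p q : R * 'rV[R]_k) :
  1 <= alpha -> 0 < p.1 <= 2^-1 ->
  eucl_norm p.2 <= (1 - eps) * p.1 `^ alpha ->
  (1 + 2 * alpha) * eucl_dist p q < eps * p.1 `^ alpha -> Omega alpha q.
Proof.
move=> alpha_ge1 /andP[x_gt0 x_le] norm_le dist_lt.
have dist_fst := norm_fst_le_dist p q; have dist_snd := eucl_norm_le_dist p q.
move: norm_le dist_lt dist_fst dist_snd; set x := p.1; set X := x `^ alpha.
set d := eucl_dist p q => norm_le dist_lt dist_fst dist_snd.
have d_ge0 : 0 <= d := sqrtr_ge0 _.
have X_gt0 : 0 < X := powR_gt0 _ x_gt0.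
have X_le : X <= x by apply: ge1r_powR => //; apply/andP; split; lra.
have norm_ge0 : 0 <= eucl_norm p.2 := sqrtr_ge0 _.
have eps_le1 : eps <= 1 by nra.
have d_le : 3 * d <= x by nra.
move: dist_fst; rewrite ler_norml => /andP[q1_lo q1_hi].
split; first by apply/andP; split; lra.
have norm_q : eucl_norm q.2 <= eucl_norm p.2 + d.
  rewrite -[q.2](addrNK p.2) addrC; apply: le_trans (eucl_normD _ _) _.
  by rewrite lerD2l.
set s := d / x; have xs : x * s = d by rewrite /s; field; lra.
have s_bnd : 0 <= s <= 2^-1 by apply/andP; split; nra.
have pow_lo : X * (1 - 2 * alpha * s) <= q.1 `^ alpha.
  apply: (@le_trans _ _ ((x - d) `^ alpha)); last first.
    by apply: ge0_ler_powR; rewrite ?nnegrE; lra.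
  have -> : x - d = x * (1 - s) by rewrite -xs; ring.
  rewrite powRM; [|lra|lra].
  by rewrite ler_wpM2l ?powR_1B_ge //; lra.
have Xs_le : alpha * (X * s) <= alpha * d.
  by rewrite -xs ler_wpM2l ?ler_wpM2r //; lra.
nra.
Qed.

End Omega.

Lemma open_notin_tboundary (T : topologicalType) (A : set T) (x : T) :
  open A -> A x -> ~ tboundary A x.
Proof. by rewrite openE => oA Ax [_]; apply; exact: oA. Qed.

Lemma ell_bounds m : (0 < m)%N -> (2 ^ (ell m).-1 <= m < 2 ^ ell m)%N.
Proof. by move=> m_gt0; rewrite trunc_logP // trunc_log_ltn. Qed.

Lemma Sjm_fst_bounds (R : realType) k (alpha : R) j m (p : R * 'rV[R]_k) :
  (0 < m)%N -> Sjm alpha j m p -> (2 ^+ j.+1)^-1 <= p.1 <= (2 ^+ j)^-1.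
Proof.
move=> m_gt0 [/andP[x_lo x_hi] _]; have /andP[m_lo m_hi] := ell_bounds m_gt0.
move: x_lo x_hi m_lo m_hi; rewrite /ell /=; set l := trunc_log 2 m.
rewrite exprD => x_lo x_hi m_lo m_hi.
have m_lo' : 2 ^+ l <= m%:R :> R by rewrite -natrX ler_nat.
have m_hi' : m.+1%:R <= 2 ^+ l.+1 :> R by rewrite -natrX ler_nat.
have pow_gt0 i : 0 < 2 ^+ i :> R by rewrite exprn_gt0.
apply/andP; split.
- apply: le_trans x_lo; rewrite ler_pdivlMr ?mulr_gt0 //.
  by rewrite (_ : _ * _ = 2 ^+ l) // !exprS; field; rewrite gt_eqF.
- apply: le_trans x_hi _; rewrite ler_pdivrMr ?mulr_gt0 //.
  by rewrite (_ : _ * _ = 2 ^+ l.+1) //; field; rewrite gt_eqF.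
Qed.

Theorem mainTheorem7 (R : realType) (alpha : R) (halpha : 1 < alpha) :
  exists C : R, 0 < C /\
    forall (n : nat), (2 <= n)%N ->
    forall (j m : nat), (0 < j)%N -> (0 < m)%N ->
    forall (p q : R * 'rV[R]_(n.-1)),
      Sjm alpha j m p -> tboundary (@Omega R n.-1 alpha) q ->
      C * (2 `^ (alpha * j%:R + (ell m)%:R))^-1 <= eucl_dist p q.
Proof.
pose C := (1 + 2 * alpha)^-1 * (2 `^ alpha)^-1.
exists C; split; first by rewrite mulr_gt0 ?invr_gt0 ?powR_gt0 //; lra.
move=> n _ j m j_gt0 m_gt0 p q Sp q_bd; rewrite leNgt; apply/negP => pq_close.
have /andP[x_lo x_hi] := Sjm_fst_bounds m_gt0 Sp.
have x_gt0 : 0 < p.1 by apply: lt_le_trans x_lo; rewrite invr_gt0 exprn_gt0.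
have x_le : p.1 <= 2^-1.
  apply: le_trans x_hi _; rewrite lef_pV2 ?posrE ?exprn_gt0 //.
  by rewrite -[leLHS]expr1 ler_eXn2l ?ltr1n.
apply: open_notin_tboundary (@open_Omega R n.-1 alpha) _ q_bd.
apply: (Omega_of_dist_lt (eps := (2 ^+ ell m)^-1) (p := p)); first exact: ltW.
- by rewrite x_gt0.
- by case: Sp => _ /andP[_]; rewrite div1r.
apply: lt_le_trans (dyadic_scale_le_powR (ell m) _ x_lo); last lra.
rewrite /C -mulrA mulrC ltr_pdivlMr in pq_close; last lra.
by rewrite mulrC.
Qed.
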